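(* Let $n\ge 3$ and let $H_{2n}(t)=\sum_{k\ge 0}\dim_{\mathbb C}\big(\mathbb{C}\langle u,v\rangle^{D_{2n}}\big)^{(k)}t^k$ be the Hilbert series of the algebra of invariants of $D_{2n}$ acting on $\mathbb{C}\langle u,v\rangle$ as described in the context. Then: (i) if $n=2m+1$ is odd, $m\ge 1$, \[ H_{2n}(t)=\frac{1}{2}+\frac{1}{2n(1-2t)}+\frac{1}{n}\sum_{k=1}^{m}\frac{1}{1-2\cos\left(\frac{2k\pi}{n}\right)t}; \] (ii) if $n=2m+2$ is even, $m\ge 1$, \[ H_{2n}(t)=\frac{1}{2}+\frac{1}{2n(1-2t)}+\frac{1}{2n(1+2t)}+\frac{1}{n}\sum_{k=1}^{m}\frac{1}{1-2\cos\left(\frac{2k\pi}{n}\right)t}. \]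
   Context: $\mathbb{C}\langle u,v\rangle$ is the free associative unital algebra over $\mathbb C$ on two noncommuting variables $u,v$, graded by total degree; $(\cdot)^{(k)}$ denotes the homogeneous component of degree $k$. The dihedral group $D_{2n}=\langle\rho,\tau\mid \rho^n=\tau^2=(\tau\rho)^2=1\rangle$ of order $2n$ acts linearly on the span of $u,v$ by $\rho(u)=\xi u$, $\rho(v)=\xi^{-1}v$, $\tau(u)=v$, $\tau(v)=u$, where $\xi=e^{2\pi i/n}$, and this action is extended to $\mathbb{C}\langle u,v\rangle$ by algebra automorphisms: $g(f(u,v))=f(g(u),g(v))$. $\mathbb{C}\langle u,v\rangle^{D_{2n}}$ is the subalgebra of elements fixed by all $g\in D_{2n}$. *)

From HB Require Import structures.
From mathcomp Require Import all_boot all_order all_algebra.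
From mathcomp Require Import complex.
From mathcomp Require Import all_classical all_reals all_analysis.
Set Implicit Arguments. Unset Strict Implicit. Unset Printing Implicit Defensive.
Import Order.TTheory GRing.Theory Num.Theory.
Local Open Scope ring_scope.
Local Open Scope complex_scope.

(* Words of length k in the letters u (= true) and v (= false).
   The degree-k component of C<u,v> is the C-vector space with basis the
   words of length k; an element is its coefficient function. *)
Definition degcomp (R : realType) (k : nat) :=
  {ffun k.-tuple bool -> (R[i])^o}.

Definition xi (R : realType) (n : nat) : R[i] :=
  (cos (2 * pi / n%:R))%:C + 'i * (sin (2 * pi / n%:R))%:C.

(* Action of the group element rho^a tau^b of D_{2n} on the degree-k
   component.  On letters: tau^b swaps u,v iff b; rho^a multiplies u by
   xi^a and v by xi^-a.  A word w is sent to c * w' with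
   w' = map (xorb b) w and c = xi^(a * #u(w')) * xi^(-a * #v(w')), hence the
   coefficient of w' in g(f) is c * f(w) where w = map (xorb b) w'. *)
Definition dact (R : realType) (n k : nat) (a : 'I_n) (b : bool)
    (f : degcomp R k) : degcomp R k :=
  [ffun w : k.-tuple bool =>
     ((xi R n ^+ a) ^+ count id w * ((xi R n)^-1 ^+ a) ^+ count negb w
      * f [tuple of map (xorb b) w] : (R[i])^o)].

Definition invariants (R : realType) (n k : nat) : {vspace degcomp R k} :=
  (\bigcap_(g : 'I_n * bool) lker (linfun (dact g.1 g.2) - \1%VF)%VF)%VS.

Definition invdim (R : realType) (n k : nat) : nat := \dim (invariants R n k).

From HB Require Import structures.
From mathcomp Require Import all_boot all_order all_algebra.
From mathcomp Require Import complex.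
From mathcomp Require Import all_classical all_reals all_analysis.
From mathcomp Require Import ring lra zify.
Import Order.TTheory GRing.Theory Num.Theory.
Local Open Scope ring_scope.

(* A word w of length k is sent by rho^a to xi^(a(#u(w) - #v(w))) w and by tau
   to the word with u and v exchanged.  Hence an invariant vanishes off the
   balanced words (#u = #v mod n) and is constant on the pairs {w, swapped w},
   so its dimension is (#balanced + [k = 0]) / 2.  Averaging the character
   w |-> xi^(#u - #v) over the cyclic group gives
   n #balanced = sum_a (xi^a + xi^-a)^k = sum_a (2 cos (2 pi a / n))^k, so
   H(t) = 1/2 + 1/(2n) sum_(a < n) 1 / (1 - 2 cos (2 pi a / n) t),
   and pairing a with n - a gives the two closed forms. *)

Section RootOfUnity.
Variables (R : realType) (n : nat).
Local Notation theta := (2 * pi / n%:R : R).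
Local Notation cis x := ((cos x +i* sin x)%C : R[i]).

Lemma cisD (x y : R) : cis x * cis y = cis (x + y).
Proof. by rewrite cosD sinD; congr (Complex _ _); rewrite addrC. Qed.

Lemma xi_exp a : xi R n ^+ a = cis (a%:R * theta).
Proof.
have -> : xi R n = cis theta by rewrite [RHS]complexE.
elim: a => [|a IH]; first by rewrite expr0 mul0r cos0 sin0.
rewrite exprS IH cisD -addn1 natrD.
by congr (Complex (cos _) (sin _)); ring.
Qed.

Lemma xiV_exp a : (xi R n)^-1 ^+ a = cis (- (a%:R * theta)).
Proof. by rewrite exprVn xi_exp; apply: mulr1_eq; rewrite cisD subrr cos0 sin0. Qed.

Lemma xi_expn : (0 < n)%N -> xi R n ^+ n = 1.
Proof.
move=> n_gt0; rewrite xi_exp mulrCA mulrV ?unitfE ?pnatr_eq0 -?lt0n // mulr1.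
by rewrite mulr_natl cos2pi sin2pi.
Qed.

Lemma xi_add_xiV_exp a :
  xi R n ^+ a + (xi R n)^-1 ^+ a = (2 * cos (a%:R * theta))%:C%C.
Proof. by rewrite xi_exp xiV_exp cosN sinN; congr (Complex _ _); rewrite ?subrr; ring. Qed.

End RootOfUnity.

(* rho multiplies the word s by [phase s]. *)
Definition phase (R : realType) (n : nat) (s : seq bool) : R[i] :=
  xi R n ^+ count id s * (xi R n)^-1 ^+ count negb s.

Definition balanced (R : realType) (n : nat) (s : seq bool) := phase R n s == 1.

Definition swap_letters {k} (w : k.-tuple bool) : k.-tuple bool := map_tuple negb w.

(* For k = 0 the empty word is its own swap and its own representative. *)
Definition orbit_rep {k} (w : k.-tuple bool) :=
  if head false w then w else swap_letters w.

Lemma phase_cons (R : realType) n b s :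
  phase R n (b :: s) = (if b then xi R n else (xi R n)^-1) * phase R n s.
Proof.
by case: b; rewrite /phase /= ?add1n ?add0n exprS; [rewrite mulrA | rewrite mulrCA].
Qed.

Lemma phase_swap (R : realType) n k (w : k.-tuple bool) :
  phase R n (swap_letters w) = (phase R n w)^-1.
Proof.
have swap_count : count negb (map negb w) = count id w.
  by rewrite count_map; apply: eq_count => b /=; rewrite negbK.
by rewrite /phase /= swap_count count_map invfM -!exprVn invrK mulrC.
Qed.

Lemma balanced_swap (R : realType) n k (w : k.-tuple bool) :
  balanced R n (swap_letters w) = balanced R n w.
Proof. by rewrite /balanced phase_swap invr_eq1. Qed.

Lemma swap_lettersK k : involutive (@swap_letters k).
Proof. by move=> w; apply: val_inj; exact: (mapK negbK). Qed.

Lemma orbit_rep_swap k (w : k.-tuple bool) : orbit_rep (swap_letters w) = orbit_rep w.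
Proof.
case: k w => [|k] w; first by rewrite [LHS]tuple0 [RHS]tuple0.
case/tupleP: w => b w; rewrite /orbit_rep swap_lettersK.
by case: b.
Qed.

Lemma orbit_rep_id k (w : k.-tuple bool) : orbit_rep (orbit_rep w) = orbit_rep w.
Proof.
case E: (head false w); rewrite {2 3}/orbit_rep E; first by rewrite /orbit_rep E.
by rewrite orbit_rep_swap /orbit_rep E.
Qed.

Lemma balanced_rep (R : realType) n k (w : k.-tuple bool) :
  balanced R n (orbit_rep w) = balanced R n w.
Proof. by rewrite /orbit_rep; case: ifP => // _; rewrite balanced_swap. Qed.

Lemma sum_phase_exp (R : realType) n a k :
  \sum_(w : k.-tuple bool) phase R n w ^+ a = (xi R n ^+ a + (xi R n)^-1 ^+ a) ^+ k.
Proof.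
elim: k => [|k IH].
  rewrite (big_pred1 [tuple]) => [|w]; last by apply/esym/eqP; exact: tuple0.
  by rewrite /phase /= !expr0 mulr1 expr1n.
rewrite (reindex (fun p : bool * k.-tuple bool => [tuple of p.1 :: p.2])) /=; last first.
  exists (fun w : k.+1.-tuple bool => (thead w, [tuple of behead w])).
    by case=> b w _ /=; congr (_, _); apply: val_inj.
  by move=> w _; rewrite [in RHS](tuple_eta w).
rewrite -(pair_bigA _ (fun b (w : k.-tuple bool) => phase R n (b :: w) ^+ a)).
rewrite big_bool /=; under eq_bigr do rewrite phase_cons exprMn.
under [X in _ + X]eq_bigr do rewrite phase_cons exprMn.
by rewrite -!mulr_sumr IH -mulrDl exprS exprVn.
Qed.

Lemma dact_is_linear (R : realType) (n k : nat) (a : 'I_n) (b : bool) :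
  linear (@dact R n k a b).
Proof. by move=> c f g; apply/ffunP => w; rewrite !ffunE mulrDr mulrCA. Qed.

HB.instance Definition _ (R : realType) (n k : nat) (a : 'I_n) (b : bool) :=
  GRing.isLinear.Build _ _ _ _ (@dact R n k a b) (@dact_is_linear R n k a b).

Section Invariants.
Variables (R : realType) (n k : nat).
Hypothesis n_gt1 : (1 < n)%N.
Local Notation word := (k.-tuple bool).
Local Notation balanced := (balanced R n).

Lemma dactE (a : 'I_n) (b : bool) (f : degcomp R k) (w : word) :
  dact a b f w = phase R n w ^+ a * f (if b then swap_letters w else w).
Proof.
rewrite ffunE /phase exprMn -!exprM mulnC [(count negb w * a)%N]mulnC !exprM.
by case: b; congr (_ * f _); apply: val_inj; rewrite //= map_id.
Qed.

Lemma mem_invariants (f : degcomp R k) :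
  (f \in invariants R n k) = [forall g : 'I_n * bool, dact g.1 g.2 f == f].
Proof.
have fixedE g : (f \in lker (linfun (dact g.1 g.2) - \1)%VF) = (dact g.1 g.2 f == f).
  by rewrite memv_ker add_lfunE opp_lfunE lfunE id_lfunE /= subr_eq0.
apply/subv_bigcapP/forallP => [fixed g | fixed g _].
  by rewrite -fixedE memvE fixed.
by rewrite -memvE fixedE.
Qed.

Lemma invariantsP (f : degcomp R k) :
  reflect [/\ forall w, f (swap_letters w) = f w
            & forall w : word, ~~ balanced w -> f w = 0]
          (f \in invariants R n k).
Proof.
rewrite mem_invariants; apply: (iffP forallP) => [fixed | [f_swap f_bal] [a b]].
  split=> w.
    have /eqP/ffunP/(_ w) := fixed (Ordinal (ltnW n_gt1), true).
    by rewrite dactE expr0 mul1r.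
  have /eqP/ffunP/(_ w) := fixed (Ordinal n_gt1, false).
  rewrite dactE expr1 => /eqP; rewrite -subr_eq0 -{2}(mul1r (f w)) -mulrBl.
  by rewrite mulf_eq0 subr_eq0 /balanced => /orP[/eqP->|/eqP->]; rewrite ?eqxx.
apply/eqP/ffunP => w /=; rewrite dactE.
have [/eqP->|unbal] := boolP (balanced w).
  by rewrite expr1n mul1r; case: b; rewrite ?f_swap.
by case: b; rewrite ?f_swap f_bal ?mulr0.
Qed.

Definition orbit_reps := [pred w : word | balanced w && (orbit_rep w == w)].

Definition extend_from_reps (g : {ffun {w | orbit_reps w} -> R[i]^o}) : degcomp R k :=
  [ffun w => if insub (orbit_rep w) is Some s then g s else 0].

Lemma extend_from_reps_is_linear : linear extend_from_reps.
Proof.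
move=> c g h; apply/ffunP => w; rewrite !ffunE.
by case: insub => [s|]; rewrite ?ffunE // scaler0 addr0.
Qed.

HB.instance Definition _ :=
  GRing.isLinear.Build _ _ _ _ extend_from_reps extend_from_reps_is_linear.

Lemma extend_from_repsE g (s : {w | orbit_reps w}) : extend_from_reps g (val s) = g s.
Proof. by have /andP[_ /eqP rep_s] := valP s; rewrite ffunE rep_s valK. Qed.

Lemma extend_from_reps_invariant g : extend_from_reps g \in invariants R n k.
Proof.
apply/invariantsP; split=> w; first by rewrite !ffunE orbit_rep_swap.
by move=> unbal; rewrite ffunE insubN //= balanced_rep (negbTE unbal).
Qed.

Lemma extend_from_reps_restrict f : f \in invariants R n k ->
  extend_from_reps [ffun s => f (val s)] = f.
Proof.
move=> /invariantsP[f_swap f_bal]; apply/ffunP => w; rewrite ffunE.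
case: insubP => [s _ val_s|not_rep].
  by rewrite ffunE val_s /orbit_rep; case: ifP => // _; apply: f_swap.
by rewrite f_bal //; move: not_rep; rewrite /= orbit_rep_id eqxx andbT balanced_rep.
Qed.

Lemma invdim_card : invdim R n k = #|orbit_reps|.
Proof.
rewrite /invdim; have -> : invariants R n k = limg (linfun extend_from_reps).
  apply/vspaceP => f; apply/idP/memv_imgP => [f_inv | [g _ ->]].
    by exists [ffun s => f (val s)]; rewrite ?memvf // lfunE /= extend_from_reps_restrict.
  by rewrite lfunE extend_from_reps_invariant.
have inj : lker (linfun extend_from_reps) = 0%VS.
  apply/eqP/lker0P => g1 g2; rewrite !lfunE /= => eq_ext.
  by apply/ffunP => s; rewrite -!extend_from_repsE eq_ext.
by rewrite limg_dim_eq ?inj ?capv0 // dimvf /dim /= muln1 card_sig.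
Qed.

End Invariants.

Lemma sum_expr_root_of_unity (F : fieldType) (z : F) m : z ^+ m = 1 ->
  \sum_(a < m) z ^+ a = if z == 1 then m%:R else 0.
Proof.
move=> zm1; case: eqP => [->|z_neq1].
  by under eq_bigr do rewrite expr1n; rewrite sumr_const card_ord.
have /esym/eqP := subrX1 z m; rewrite zm1 subrr mulf_eq0 subr_eq0.
by case/orP => /eqP.
Qed.

Section Counting.
Variables (R : realType) (n k : nat).
Hypothesis n_gt1 : (1 < n)%N.
Local Notation word := (k.-tuple bool).
Local Notation balanced := (balanced R n).

Lemma phase_expn (s : seq bool) : phase R n s ^+ n = 1.
Proof.
by rewrite /phase exprMn -!exprM !(mulnC _ n) !exprM exprVn xi_expn ?(ltnW n_gt1)
  // invr1 !expr1n mulr1.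
Qed.

Lemma card_balanced :
  (n * #|[pred w : word | balanced w]|)%:R =
  \sum_(a < n) (2 * cos (a%:R * (2 * pi / n%:R))) ^+ k :> R.
Proof.
apply: (@complexI R); rewrite rmorph_nat rmorph_sum /=.
transitivity (\sum_(a < n) \sum_(w : word) phase R n w ^+ a).
  rewrite exchange_big /=; under eq_bigr do rewrite sum_expr_root_of_unity ?phase_expn //.
  by rewrite -big_mkcond /= sumr_const mulnC natrM mulr_natl; congr (_ *+ _); apply: eq_card.
by apply: eq_bigr => a _; rewrite sum_phase_exp xi_add_xiV_exp rmorphXn.
Qed.

Lemma card_orbit_reps :
  (#|orbit_reps R n k| * 2 = #|[pred w : word | balanced w]| + (k == 0))%N.
Proof.
case: k => [|k'].
  have bal0 : balanced [tuple] by rewrite /balanced /phase /= !expr0 mulr1.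
  have all0 (P : pred (0.-tuple bool)) : P [tuple] -> P =i pred1 [tuple].
    by move=> P0 w; apply/idP/idP => [_|/eqP->]; [apply/eqP; exact: tuple0 | exact: P0].
  rewrite (eq_card (all0 _ bal0)) (eq_card (all0 (orbit_reps R n 0) _)) ?card1 //.
  by rewrite !inE bal0; apply/eqP; exact: tuple0.
pose bal := [pred w : k'.+1.-tuple bool | balanced w].
pose heads := [pred w : k'.+1.-tuple bool | head false w].
have head_swap (w : k'.+1.-tuple bool) : head false (swap_letters w) = ~~ head false w.
  by case/tupleP: w.
have reps_heads : orbit_reps R n k'.+1 =i [predI bal & heads].
  move=> w; rewrite !inE /=; case h: (head false w); rewrite /orbit_rep h ?eqxx //.
  have /negbTE-> // : swap_letters w != w.
  by apply/eqP => sw; move: (head_swap w); rewrite sw h.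
(* swapping the letters exchanges the balanced words with and without head u *)
have swap_card : #|[predD bal & heads]| = #|[predI bal & heads]|.
  rewrite -!sum1_card (reindex_inj (inv_inj (@swap_lettersK k'.+1))) /=.
  by apply: eq_bigl => w; rewrite !inE /= balanced_swap head_swap negbK andbC.
by rewrite (eq_card reps_heads) -(cardID heads bal) swap_card muln2 addnn addn0.
Qed.

Lemma invdim_formula :
  (invdim R n k)%:R = 2^-1 * ((k == 0)%:R +
     n%:R^-1 * \sum_(a < n) (2 * cos (a%:R * (2 * pi / n%:R))) ^+ k) :> R.
Proof.
have n_neq0 : n%:R != 0 :> R by rewrite pnatr_eq0 -lt0n ltnW.
have reps2 : #|orbit_reps R n k|%:R * 2 =
              #|[pred w : word | balanced w]|%:R + (k == 0)%:R :> R.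
  by rewrite -natrM -natrD card_orbit_reps.
rewrite invdim_card // -card_balanced natrM mulKf // addrC -reps2.
by rewrite mulrC mulfK ?pnatr_eq0.
Qed.

End Counting.

Local Open Scope classical_set_scope.
Local Open Scope ring_scope.

Definition geom_cos {R : realType} (n : nat) (t : R) (a : nat) : R :=
  (1 - 2 * cos (a%:R * (2 * pi / n%:R)) * t)^-1.

Section GeneratingFunction.
Import numFieldNormedType.Exports.

Lemma invdim_series_cvg (R : realType) n (t : R) : (1 < n)%N -> `|t| < 2^-1 ->
  (fun N => \sum_(0 <= k < N) (invdim R n k)%:R * t ^+ k) @ \oo -->
  2^-1 + (2 * n%:R)^-1 * \sum_(a < n) geom_cos n t a.
Proof.
move=> n_gt1 t_small.
pose c (a : 'I_n) : R := 2 * cos (a%:R * (2 * pi / n%:R)).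
have n_neq0 : n%:R != 0 :> R by rewrite pnatr_eq0 -lt0n ltnW.
have partialE N : \sum_(0 <= k < N.+1) (invdim R n k)%:R * t ^+ k =
    2^-1 + (2 * n%:R)^-1 * \sum_(a < n) series (geometric 1 (c a * t)) N.+1.
  under eq_bigr do rewrite invdim_formula // mulrDr mulrDl.
  rewrite big_split big_nat_recl //= expr0 !mulr1 big1 ?addr0 => [|k _];
    last by rewrite mulr0 mul0r.
  congr (_ + _); rewrite /series /= exchange_big [RHS]mulr_sumr.
  apply: eq_bigr => k _; under [in RHS]eq_bigr do rewrite mul1r exprMn.
  by rewrite -mulr_suml /c; field.
rewrite -cvg_shiftS (eq_cvg _ _ partialE).
apply: cvgD; first exact: cvg_cst.
apply: cvgMl_tmp; apply: cvg_big => [|a _]; first exact: add_continuous.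
have ct_small : `|c a * t| < 1.
  rewrite normrM /c normrM ger0_norm //.
  have := ler_wpM2r (normr_ge0 t) (cos_max (a%:R * (2 * pi / n%:R))).
  by lra.
by rewrite cvg_shiftS; have := cvg_geometric_series (a := 1) ct_small; rewrite mul1r.
Qed.

End GeneratingFunction.

Lemma big_nat_reflect (V : nmodType) (F : nat -> V) p m : (m <= p)%N ->
  (forall i, (0 < i <= m)%N -> F (p - i)%N = F i) ->
  \sum_(p - m <= a < p) F a = \sum_(1 <= a < m.+1) F a.
Proof.
elim: m => [|m IH] m_le_p F_sym; first by rewrite subn0 !big_geq.
rewrite big_ltn; last by lia.
rewrite subnSK // IH; [|exact: ltnW|]; last first.
  by move=> i /andP[i_gt0 i_le_m]; apply: F_sym; rewrite i_gt0 ltnW.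
by rewrite [RHS]big_nat_recr //= F_sym ?leqnn // addrC.
Qed.

Section FoldCos.
Variables (R : realType) (n : nat) (t : R).
Hypothesis n_gt0 : (0 < n)%N.

Lemma geom_cos_reflect i : (i <= n)%N -> geom_cos n t (n - i) = geom_cos n t i.
Proof.
move=> i_le_n; have n_neq0 : n%:R != 0 :> R by rewrite pnatr_eq0 -lt0n.
rewrite /geom_cos natrB // mulrBl (_ : n%:R * (2 * pi / n%:R) = pi *+ 2).
  by rewrite [pi *+ 2 - _]addrC cosD2pi cosN.
by rewrite -mulr_natl; field.
Qed.

Lemma geom_cos0 : geom_cos n t 0 = (1 - 2 * t)^-1.
Proof. by rewrite /geom_cos mul0r cos0 mulr1. Qed.

Lemma geom_cos_half m : n = (2 * m)%N -> geom_cos n t m = (1 + 2 * t)^-1.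
Proof.
move=> n_2m; have m_neq0 : m%:R != 0 :> R by rewrite pnatr_eq0 -lt0n; lia.
rewrite /geom_cos n_2m natrM (_ : m%:R * (2 * pi / (2 * m%:R)) = pi).
  by rewrite cospi mulrN1 mulNr opprK.
by field.
Qed.

Lemma sum_geom_cosE m :
  \sum_(1 <= k < m.+1) (1 - 2 * cos (2 * k%:R * pi / n%:R) * t)^-1 =
  \sum_(1 <= k < m.+1) geom_cos n t k.
Proof. by apply: eq_bigr => k _; rewrite /geom_cos mulrA mulrA (mulrC k%:R 2). Qed.

Lemma sum_geom_cos_odd m : n = (2 * m + 1)%N ->
  \sum_(a < n) geom_cos n t a =
  (1 - 2 * t)^-1 + (\sum_(1 <= k < m.+1) geom_cos n t k) *+ 2.
Proof.
move=> n_eq; rewrite -(big_mkord xpredT) big_ltn // geom_cos0.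
rewrite (big_cat_nat _ (n := m.+1)) //=; last by lia.
have -> : \sum_(m.+1 <= a < n) geom_cos n t a = \sum_(1 <= a < m.+1) geom_cos n t a.
  rewrite -[in LHS](_ : (n - m)%N = m.+1); last by lia.
  by apply: big_nat_reflect => [|i /andP[_ i_le_m]]; [lia | apply: geom_cos_reflect; lia].
by ring.
Qed.

Lemma sum_geom_cos_even m : n = (2 * m + 2)%N ->
  \sum_(a < n) geom_cos n t a =
  (1 - 2 * t)^-1 + (1 + 2 * t)^-1 + (\sum_(1 <= k < m.+1) geom_cos n t k) *+ 2.
Proof.
move=> n_eq; rewrite -(big_mkord xpredT) big_ltn // geom_cos0.
rewrite (big_cat_nat _ (n := m.+1)) //=; last by lia.
rewrite (big_ltn (m := m.+1)); last by lia.
rewrite (@geom_cos_half m.+1); last by lia.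
have -> : \sum_(m.+2 <= a < n) geom_cos n t a = \sum_(1 <= a < m.+1) geom_cos n t a.
  have -> : m.+2 = (n - m)%N by lia.
  by apply: big_nat_reflect => [|i /andP[_ i_le_m]]; [lia | apply: geom_cos_reflect; lia].
by ring.
Qed.

End FoldCos.

Theorem mainTheorem1 (R : realType) (n : nat) (hn : (3 <= n)%N) (t : R)
    (ht : `|t| < 2^-1) :
  let H := fun N : nat => \sum_(0 <= k < N) (invdim R n k)%:R * t ^+ k in
  (forall m : nat, (1 <= m)%N -> n = (2 * m + 1)%N ->
     H @ \oo --> (2^-1 + (2 * n%:R * (1 - 2 * t))^-1
        + n%:R^-1 * \sum_(1 <= k < m.+1)
              (1 - 2 * cos (2 * k%:R * pi / n%:R) * t)^-1)) /\
  (forall m : nat, (1 <= m)%N -> n = (2 * m + 2)%N ->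
     H @ \oo --> (2^-1 + (2 * n%:R * (1 - 2 * t))^-1
        + (2 * n%:R * (1 + 2 * t))^-1
        + n%:R^-1 * \sum_(1 <= k < m.+1)
              (1 - 2 * cos (2 * k%:R * pi / n%:R) * t)^-1)).
Proof.
have n_gt1 : (1 < n)%N by apply: leq_trans hn.
have n_neq0 : n%:R != 0 :> R by rewrite pnatr_eq0 -lt0n ltnW.
have [t2_neq0 t2'_neq0] : 1 - 2 * t != 0 /\ 1 + 2 * t != 0.
  by move: ht; rewrite ltr_norml => /andP[? ?]; split; apply/eqP; lra.
have n_gt0 := ltnW n_gt1.
have cvgH := @invdim_series_cvg R n t n_gt1 ht.
move=> H; split=> m _ n_eq; rewrite sum_geom_cosE
  [X in _ --> X](_ : _ = 2^-1 + (2 * n%:R)^-1 * \sum_(a < n) geom_cos n t a) //.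
- by rewrite (@sum_geom_cos_odd R n t n_gt0 m n_eq); field; rewrite n_neq0 t2_neq0.
- by rewrite (@sum_geom_cos_even R n t n_gt0 m n_eq); field; rewrite n_neq0 t2_neq0 t2'_neq0.
Qed.
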